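(* Let $C=L_1;\ldots;L_d$ be a sorting network of depth $d\ge2$ on $n$ channels containing no redundant comparators. Then every comparator $(i,j)\in L_{d-1}$ connects adjacent blocks of $C$; that is, every channel $m$ with $i<m<j$ belongs either to the block containing $i$ or to the block containing $j$.
   Context: Channels are numbered $1,\ldots,n$. A comparator network of depth $d$ is a sequence $C=L_1;\ldots;L_d$ of layers; each layer is a set of comparators $(i,j)$ with $1\le i<j\le n$, each channel occurring in at most one comparator of a layer. An input $\bar x\in\{0,1\}^n$ propagates: $\bar x_0=\bar x$, and $\bar x_k$ is obtained from $\bar x_{k-1}$ by, for each $(i,j)\in L_k$, putting the minimum of the values at positions $i,j$ at position $i$ and the maximum at position $j$. The output is $C(\bar x)=\bar x_d$; $C$ is a sorting network if $C(\bar x)$ is sorted non-decreasingly for all $\bar x\in\{0,1\}^n$. A comparator $(i,j)\in L_\ell$ is redundant if for every input $\bar x$ we have $(\bar x_{\ell-1})_i\le(\bar x_{\ell-1})_j$. The blocks of $C$ are the vertex sets of the connected components of the graph on $\{1,\ldots,n\}$ with an edge $\{i,j\}$ for each comparator $(i,j)$ in the last layer $L_d$. *)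

(* Channels are 0-indexed: 'I_n stands for {1,...,n}. *)
From mathcomp Require Import all_boot.
Set Implicit Arguments. Unset Strict Implicit. Unset Printing Implicit Defensive.

Definition comparator (n : nat) := ('I_n * 'I_n)%type.
Definition layer (n : nat) := {set comparator n}.
Definition network (n : nat) := seq (layer n).

Definition valid_layer n (L : layer n) : Prop :=
  (forall c, c \in L -> c.1 < c.2) /\
  (forall c c', c \in L -> c' \in L -> c != c' ->
     [/\ c.1 != c'.1, c.1 != c'.2, c.2 != c'.1 & c.2 != c'.2]).

Definition valid_network n (C : network n) : Prop :=
  forall L, L \in C -> valid_layer L.

Definition apply_layer n (L : layer n) (x : {ffun 'I_n -> bool}) :
  {ffun 'I_n -> bool} :=
  [ffun k => match [pick c in L | (c.1 == k) || (c.2 == k)] with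
             | Some c => if c.1 == k then x c.1 && x c.2 else x c.1 || x c.2
             | None => x k
             end].

Definition state n (C : network n) (x : {ffun 'I_n -> bool}) (k : nat) :=
  foldl (fun y L => apply_layer L y) x (take k C).

Definition output n (C : network n) x := state C x (size C).

Definition sorted_bits n (y : {ffun 'I_n -> bool}) : Prop :=
  forall i j : 'I_n, i <= j -> (y i <= y j)%N.

Definition sorting_network n (C : network n) : Prop :=
  forall x, sorted_bits (output C x).

(* Comparator c in layer L_(l+1) (0-based index l) is redundant. *)
Definition redundant n (C : network n) (l : nat) (c : comparator n) : Prop :=
  forall x, (state C x l c.1 <= state C x l c.2)%N.

Definition no_redundant n (C : network n) : Prop :=
  forall l, l < size C -> forall c, c \in nth set0 C l -> ~ redundant C l c.

(* Blocks: connected components of the graph whose edges are the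
   comparators of the last layer. *)
Definition last_edge n (C : network n) : rel 'I_n :=
  fun a b => ((a, b) \in last set0 C) || ((b, a) \in last set0 C).

Definition same_block n (C : network n) (a b : 'I_n) : bool :=
  connect (last_edge C) a b.

From mathcomp Require Import all_boot zify.
Set Implicit Arguments. Unset Strict Implicit. Unset Printing Implicit Defensive.

(* Run the network on injective nat-valued inputs; their 0/1 thresholds are
   ordinary Boolean runs, so each output is sorted and values only move along
   comparators.  If c = (i,j) in layer l is not redundant, some input has
   F_l(j) < F_l(i).  While F has an inversion, pick one whose values a < b are
   consecutive in the range of F and exchange a and b in the input: every
   threshold outside (a, b] is unchanged, so at each channel either nothing
   changes or a and b are exchanged.  This lowers the number of inversions, and
   the first exchange that flips the order at (i, j) shows that the current
   input has b at i and a at j in layer l.  After c, a and b occupy i and j;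
   being consecutive, they end at adjacent output positions P and P+1.  The last
   layer moves each of them along at most one comparator, and by the same
   argument every comparator of the last layer joins neighbouring channels; so
   a channel strictly between i and j is P or P+1 and is linked to i or j. *)

Section NatNetworks.
Variable n : nat.
Local Notation nvec := {ffun 'I_n -> nat}.

Definition comparator_at (L : layer n) (k : 'I_n) :=
  [pick c in L | (c.1 == k) || (c.2 == k)].

Definition apply_layerN (L : layer n) (F : nvec) : nvec :=
  [ffun k => match comparator_at L k with
             | Some c => if c.1 == k then minn (F c.1) (F c.2) else maxn (F c.1) (F c.2)
             | None => F k
             end].

Definition stateN (C : network n) (F : nvec) (l : nat) :=
  foldl (fun G L => apply_layerN L G) F (take l C).

Definition threshold (t : nat) (F : nvec) : {ffun 'I_n -> bool} :=
  [ffun k => t <= F k].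

Definition monotoneN (F : nvec) := forall i j : 'I_n, i <= j -> F i <= F j.

Lemma apply_layer_threshold L F t :
  apply_layer L (threshold t F) = threshold t (apply_layerN L F).
Proof.
apply/ffunP => k; rewrite /apply_layer !ffunE /comparator_at.
by case: pickP => [c _|_]; rewrite ?ffunE //; case: ifP; rewrite ?ffunE ?leq_min ?leq_max.
Qed.

Lemma state_threshold C F t l : state C (threshold t F) l = threshold t (stateN C F l).
Proof.
rewrite /state /stateN; elim: (take l C) F => [|L s IH] F //=.
by rewrite apply_layer_threshold IH.
Qed.

Lemma stateN_rcons C F l : l < size C ->
  stateN C F l.+1 = apply_layerN (nth set0 C l) (stateN C F l).
Proof. by move=> lC; rewrite /stateN (take_nth set0 lC) foldl_rcons. Qed.

Lemma sorting_network_monotoneN C F :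
  sorting_network C -> monotoneN (stateN C F (size C)).
Proof.
move=> sortC i j le_ij.
have := sortC (threshold (stateN C F (size C) i) F) i j le_ij.
by rewrite /output state_threshold !ffunE leqnn lt0b.
Qed.

Lemma valid_layer_share (L : layer n) c c' k : valid_layer L -> c \in L -> c' \in L ->
  (c.1 == k) || (c.2 == k) -> (c'.1 == k) || (c'.2 == k) -> c = c'.
Proof.
move=> [_ disjL] cL c'L ck c'k; case: (eqVneq c c') => // ne.
have [] := disjL c c' cL c'L ne.
by case/orP: ck => /eqP-> ; case/orP: c'k => /eqP->; rewrite eqxx.
Qed.

Lemma comparator_atE L c k : valid_layer L -> c \in L ->
  (c.1 == k) || (c.2 == k) -> comparator_at L k = Some c.
Proof.
move=> VL cL ck; rewrite /comparator_at; case: pickP => [c' /andP[c'L c'k] | none].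
  by rewrite (valid_layer_share VL c'L cL c'k ck).
by move: (none c); rewrite cL ck.
Qed.

Lemma comparator_at_Some L k c : comparator_at L k = Some c ->
  c \in L /\ (c.1 == k) || (c.2 == k).
Proof. by rewrite /comparator_at; case: pickP => // ? /andP[? ?] [<-]. Qed.

Lemma apply_layerN_min L F c : valid_layer L -> c \in L ->
  apply_layerN L F c.1 = minn (F c.1) (F c.2).
Proof. by move=> VL cL; rewrite ffunE (comparator_atE VL cL) ?eqxx. Qed.

Lemma apply_layerN_max L F c : valid_layer L -> c \in L ->
  apply_layerN L F c.2 = maxn (F c.1) (F c.2).
Proof.
move=> VL cL; rewrite ffunE (comparator_atE VL cL) ?eqxx ?orbT //.
by case: eqP => // e; have := VL.1 c cL; rewrite e ltnn.
Qed.

Definition partner (c : comparator n) (k : 'I_n) := if k == c.1 then c.2 else c.1.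

Definition route (L : layer n) (F : nvec) (k : 'I_n) :=
  if comparator_at L k is Some c then (if F c.2 < F c.1 then partner c k else k)
  else k.

Definition layer_edge (L : layer n) (u v : 'I_n) := ((u, v) \in L) || ((v, u) \in L).

Lemma apply_layerN_route L F k : apply_layerN L F k = F (route L F k).
Proof.
rewrite ffunE /route /partner /comparator_at; case: pickP => // c /andP[_ /orP[]/eqP<-].
  by rewrite eqxx; case: ltnP.
by have [->|_] := eqVneq c.1 c.2; [rewrite minnn ltnn | case: ltnP].
Qed.

Lemma routeK L F : valid_layer L -> involutive (route L F).
Proof.
move=> VL k; rewrite [route L F k]/route.
case E: (comparator_at L k) => [c|]; last by rewrite /route E.
have [cL ck] := comparator_at_Some E.
have c12 : c.1 != c.2 by rewrite neq_ltn VL.1.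
have [pc ppc] : ((c.1 == partner c k) || (c.2 == partner c k)) /\ partner c (partner c k) = k.
  have c21 : (c.2 == c.1) = false by rewrite eq_sym (negbTE c12).
  by rewrite /partner; case/orP: ck => /eqP<-; rewrite ?eqxx c21 ?eqxx ?orbT.
rewrite /route; case: ltnP => [swapped|kept].
  by rewrite (comparator_atE VL cL pc) swapped.
by rewrite (comparator_atE VL cL ck) ltnNge kept.
Qed.

Lemma route_edge L F k : (route L F k == k) || layer_edge L k (route L F k).
Proof.
rewrite /route; case E: (comparator_at L k) => [[p q]|]; rewrite ?eqxx //.
have [pqL /= /orP[]/eqP<-] := comparator_at_Some E; case: ifP; rewrite ?eqxx //.
  by rewrite /partner /layer_edge /= eqxx pqL orbT.
by rewrite /partner /layer_edge /=; have [->|_] := eqVneq q p; rewrite ?eqxx ?pqL ?orbT.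
Qed.

Lemma valid_network_take (C : network n) l : valid_network C -> valid_network (take l C).
Proof. by move=> VC L /mem_take; apply: VC. Qed.

Lemma valid_network_cons (L : layer n) s :
  valid_network (L :: s) -> valid_layer L /\ valid_network s.
Proof. by move=> Vs; split=> [|L' L's]; apply: Vs; rewrite inE ?eqxx ?L's ?orbT. Qed.

Lemma stateN_route C F l : valid_network C ->
  exists2 R : 'I_n -> 'I_n, injective R & forall k, stateN C F l k = F (R k).
Proof.
move=> /(valid_network_take (l := l)); rewrite /stateN.
elim: (take l C) F => [|L s IH] F /=; first by exists id.
case/valid_network_cons => VL /(IH (apply_layerN L F)) [R injR eR].
exists (route L F \o R) => [|k]; last by rewrite eR apply_layerN_route.
by apply: inj_comp injR; apply: inv_inj; apply: routeK.
Qed.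

Lemma stateN_inj C (F : nvec) l : valid_network C -> injective F -> injective (stateN C F l).
Proof.
move=> VC injF u v; have [R injR eR] := stateN_route F l VC.
by rewrite !eR => /injF/injR.
Qed.

Definition value_gap (F : nvec) a b := forall k, ~~ (a < F k < b).

Lemma stateN_gap C (F : nvec) l a b :
  valid_network C -> value_gap F a b -> value_gap (stateN C F l) a b.
Proof. by move=> VC gapF k; have [R _ ->] := stateN_route F l VC. Qed.

Lemma apply_layerN_id L F : valid_layer L -> monotoneN F -> apply_layerN L F = F.
Proof.
move=> VL monoF; apply/ffunP => k; rewrite ffunE /comparator_at.
case: pickP => // c /andP[cL /orP[]/eqP<-]; have := monoF _ _ (ltnW (VL.1 c cL)).
  by rewrite eqxx => /minn_idPl.
by case: eqP => [->|_ /maxn_idPr]; rewrite ?minnn.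
Qed.

Lemma stateN_id C F l : valid_network C -> monotoneN F -> stateN C F l = F.
Proof.
move=> /(valid_network_take (l := l)) + monoF; rewrite /stateN.
elim: (take l C) => [|L s IH] //= /valid_network_cons[VL /IH].
by rewrite apply_layerN_id.
Qed.

Definition swap_val (a b v : nat) := if v == a then b else if v == b then a else v.

Definition swap_vals a b (F : nvec) : nvec := [ffun k => swap_val a b (F k)].

Lemma swap_valK a b : involutive (swap_val a b).
Proof. by move=> v; rewrite /swap_val; do !case: eqP => //=; move=> *; subst. Qed.

Lemma swap_vals_inj a b (F : nvec) : injective F -> injective (swap_vals a b F).
Proof. by move=> injF u v; rewrite !ffunE => /(inv_inj (swap_valK a b))/injF. Qed.

Lemma threshold_swap_vals a b t F : a < b -> (t <= a) || (b < t) ->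
  threshold t (swap_vals a b F) = threshold t F.
Proof.
move=> ab t_out; apply/ffunP => k; rewrite !ffunE /swap_val.
by do !case: eqP => [->|_]; lia.
Qed.

Lemma stateN_swap_vals C F l a b t k : a < b -> (t <= a) || (b < t) ->
  (t <= stateN C (swap_vals a b F) l k) = (t <= stateN C F l k).
Proof.
move=> ab t_out; have := state_threshold C (swap_vals a b F) t l.
by rewrite threshold_swap_vals // state_threshold => /ffunP/(_ k); rewrite !ffunE.
Qed.

Lemma order_flip_gap a b ui uj vi vj : a < b -> ~~ (a < ui < b) -> ~~ (a < uj < b) ->
  (forall t, (t <= a) || (b < t) -> ((t <= vi) = (t <= ui)) /\ ((t <= vj) = (t <= uj))) ->
  uj < ui -> vi <= vj -> ui = b /\ uj = a.
Proof.
move=> ab gap_i gap_j same lt_ji le_ij.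
have := same ui; have := same uj.+1; lia.
Qed.

Definition inversion (F : nvec) (p : 'I_n * 'I_n) := (p.1 < p.2) && (F p.2 < F p.1).

Definition inversions (F : nvec) := #|[set p | inversion F p]|.

Lemma no_inversion_monotone F : (forall p, ~~ inversion F p) -> monotoneN F.
Proof.
move=> noinv u v; rewrite leq_eqVlt => /orP[/eqP/val_inj-> // | uv].
by have := noinv (u, v); rewrite /inversion /= uv -leqNgt.
Qed.

Lemma inversion_gap F p : inversion F p ->
  exists2 q, inversion F q & value_gap F (F q.2) (F q.1).
Proof.
move=> invp; case: (arg_minnP (fun q => F q.1 - F q.2) invp).
move=> -[u v] /= /andP[uv vu] qmin.
exists (u, v); rewrite /inversion ?uv ?vu //= => k; apply/negP => /andP[lo hi].
have [uk|ku|/val_inj uk] := ltngtP u k; last by rewrite uk ltnn in hi.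
  by have := qmin (u, k); rewrite /inversion /= uk hi => /(_ isT); lia.
have kv : k < v by apply: ltn_trans ku uv.
by have := qmin (k, v); rewrite /inversion /= kv lo => /(_ isT); lia.
Qed.

Lemma swap_val_lt a b x y : a < b -> ~~ (a < x < b) -> ~~ (a < y < b) ->
  swap_val a b y < swap_val a b x -> y < x \/ (x = a /\ y = b).
Proof. by move=> ab; rewrite /swap_val; do !case: eqP => [->|?]; lia. Qed.

Lemma inversions_swap_vals (F : nvec) p : injective F -> inversion F p ->
  value_gap F (F p.2) (F p.1) ->
  inversions (swap_vals (F p.2) (F p.1) F) < inversions F.
Proof.
move=> injF /andP[p12 p21] gapF; apply/proper_card/properP; split.
  apply/subsetP => -[u v]; rewrite !inE /inversion !ffunE /= => /andP[uv].
  case/(swap_val_lt p21 (gapF _) (gapF _)) => [-> | [/injF eu /injF ev]]; first by rewrite uv.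
  by move: uv; rewrite eu ev ltnNge (ltnW p12).
exists p; rewrite !inE /inversion ?p12 ?p21 // !ffunE /swap_val eqxx gtn_eqF //.
by rewrite eqxx ltnNge (ltnW p21).
Qed.

Lemma gap_at_inversion C l (i j : 'I_n) (F : nvec) :
  valid_network C -> i < j -> injective F -> stateN C F l j < stateN C F l i ->
  exists (G : nvec) a b, [/\ injective G, a < b, value_gap G a b,
                            stateN C G l i = b & stateN C G l j = a].
Proof.
move=> VC ij; have [N] := ubnP (inversions F); elim: N F => // N IH F invF injF ji.
case: (pickP (inversion F)) => [p invp | noinv]; last first.
  have monoF : monotoneN F by apply: no_inversion_monotone => p; rewrite noinv.
  by move: ji; rewrite stateN_id // ltnNge monoF // ltnW.
have [q /[dup] invq /andP[_ ab] gapq] := inversion_gap invp.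
set a := F q.2 in ab gapq; set b := F q.1 in ab gapq.
have injG : injective (swap_vals a b F) := swap_vals_inj injF.
set G := swap_vals a b F in injG *.
case: (ltnP (stateN C G l j) (stateN C G l i)) => [jiG | ijG].
  apply: IH jiG => //; rewrite -ltnS.
  exact: leq_trans (inversions_swap_vals injF invq gapq) invF.
have [] := order_flip_gap ab (stateN_gap l VC gapq i) (stateN_gap l VC gapq j) _ ji ijG.
  by move=> t t_out; rewrite !stateN_swap_vals.
by exists F, a, b.
Qed.

Lemma bits_encoding (x : {ffun 'I_n -> bool}) :
  exists2 F : nvec, injective F & threshold n F = x.
Proof.
exists [ffun k => x k * n + k] => [u v|]; rewrite ?ffunE.
  move=> /= e; apply: ord_inj; have := ltn_ord u; have := ltn_ord v.
  by move: e; do 2 case: (x _) => /=; lia.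
by apply/ffunP => k; rewrite !ffunE; have := ltn_ord k; case: (x k); lia.
Qed.

Lemma nonredundant_gap C l c : valid_network C -> l < size C ->
  c \in nth set0 C l -> ~ redundant C l c ->
  exists (G : nvec) a b, [/\ injective G, a < b, value_gap G a b,
                            stateN C G l.+1 c.1 = a & stateN C G l.+1 c.2 = b].
Proof.
move=> VC lC cL nonred; have VL : valid_layer (nth set0 C l) by apply/VC/mem_nth.
have /forallPn[x] : ~~ [forall x, state C x l c.1 <= state C x l c.2].
  by apply/negP => /forallP all; apply: nonred => x; apply: all.
have [F injF <-] := bits_encoding x; rewrite !state_threshold !ffunE => bits.
have ji : stateN C F l c.2 < stateN C F l c.1 by move: bits; do 2 case: leqP; lia.
have [G [a [b [injG ab gapG Gi Gj]]]] := gap_at_inversion VC (VL.1 c cL) injF ji.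
exists G, a, b; split=> //; rewrite stateN_rcons //.
  by rewrite apply_layerN_min // Gi Gj; lia.
by rewrite apply_layerN_max // Gi Gj; lia.
Qed.

Lemma sorted_gap_adjacent (o : nvec) a b (P Q : 'I_n) : injective o -> monotoneN o ->
  value_gap o a b -> a < b -> o P = a -> o Q = b -> Q = P.+1 :> nat.
Proof.
move=> injo monoo gapo ab oP oQ.
have PQ : P < Q by rewrite ltnNge; apply/negP => /monoo; lia.
apply/eqP; rewrite eqn_leq PQ andbT leqNgt; apply/negP => lt.
pose m := Ordinal (ltn_trans lt (ltn_ord Q)).
have mP : o m != a by rewrite -oP; apply/eqP => /injo/(congr1 val)/=; lia.
have mQ : o m != b by rewrite -oQ; apply/eqP => /injo/(congr1 val)/=; lia.
have := gapo m; have := monoo P m (leqnSn _); have := monoo m Q (ltnW lt); lia.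
Qed.

Lemma last_edge_adjacent (C : network n) (u v : 'I_n) :
  valid_network C -> sorting_network C -> no_redundant C ->
  last_edge C u v -> (u == v.+1 :> nat) || (v == u.+1 :> nat).
Proof.
move=> VC sortC nonredC.
suff adj c : c \in last set0 C -> c.2 = c.1.+1 :> nat.
  by case/orP => /adj /= ->; rewrite eqxx ?orbT.
move=> cL; have C0 : 0 < size C by move: cL; case: (C) => //; rewrite inE.
have lC : (size C).-1 < size C by rewrite prednK.
have cl : c \in nth set0 C (size C).-1 by rewrite nth_last.
have [G [a [b [injG ab gapG Ga Gb]]]] := nonredundant_gap VC lC cl (nonredC _ lC c cl).
rewrite prednK // in Ga Gb.
apply: sorted_gap_adjacent ab Ga Gb.
- exact: stateN_inj.
- exact: sorting_network_monotoneN.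
- exact: stateN_gap.
Qed.

Lemma stateN_last_route C F k : valid_network C -> 0 < size C ->
  stateN C F (size C) (route (last set0 C) (stateN C F (size C).-1) k) =
  stateN C F (size C).-1 k.
Proof.
move=> VC C0; have VL : valid_layer (last set0 C).
  by rewrite -nth_last; apply/VC/mem_nth; rewrite ltn_predL.
rewrite -[X in stateN _ _ X]prednK // stateN_rcons; last by rewrite ltn_predL.
by rewrite nth_last apply_layerN_route routeK.
Qed.

Lemma route_last_near C F k : valid_network C -> sorting_network C -> no_redundant C ->
  let r := route (last set0 C) F k in
  r = k \/ last_edge C r k /\ (r == k.+1 :> nat) || (k == r.+1 :> nat).
Proof.
move=> VC sortC nonredC /=; case/orP: (route_edge (last set0 C) F k) => [/eqP|]; first by left.
rewrite /layer_edge orbC => e; right; split=> //.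
exact: last_edge_adjacent e.
Qed.

End NatNetworks.

Theorem lemma5 (n d : nat) (C : network n) :
  valid_network C -> size C = d -> 2 <= d ->
  sorting_network C -> no_redundant C ->
  forall c : comparator n, c \in nth set0 C (d - 2) ->
  forall m : 'I_n, c.1 < m < c.2 ->
    same_block C m c.1 || same_block C m c.2.
Proof.
move=> VC <- d2 sortC nonredC c cL m /andP[c1m mc2].
have lC : size C - 2 < size C by lia.
have [G [a [b [injG ab gapG Ga Gb]]]] := nonredundant_gap VC lC cL (nonredC _ lC c cL).
rewrite (_ : (size C - 2).+1 = (size C).-1) in Ga Gb; last by lia.
set w := stateN C G (size C).-1 in Ga Gb.
have nearP := route_last_near w c.1 VC sortC nonredC.
have nearQ := route_last_near w c.2 VC sortC nonredC.
set P := route (last set0 C) w c.1 in nearP *; set Q := route (last set0 C) w c.2 in nearQ *.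
have PQ : Q = P.+1 :> nat.
  apply: (sorted_gap_adjacent (o := stateN C G (size C)) _ _ _ ab).
  - exact: stateN_inj.
  - exact: sorting_network_monotoneN.
  - exact: stateN_gap.
  - by rewrite stateN_last_route // ltnW.
  - by rewrite stateN_last_route // ltnW.
have block (r k : 'I_n) : m = r :> nat -> last_edge C r k -> same_block C m k.
  by move=> /val_inj-> e; apply: connect1.
case: nearP nearQ => [eP|[eP aP]] [eQ|[eQ aQ]].
- by move: PQ; rewrite eP eQ; lia.
- by apply/orP; right; apply: block eQ; move: PQ; rewrite eP; lia.
- by apply/orP; left; apply: block eP; move: PQ; rewrite eQ; lia.
case: (eqVneq (m : nat) P) => mP; first by rewrite (block _ _ mP eP).
by apply/orP; right; apply: block eQ; lia.
Qed.
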